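(* Define the score \[r=\frac{\mathrm{mark}}{\mathrm{entry}}\cdot\frac{\mathrm{notional}}{\mathrm{account\ value}}.\] 1. The score is homogeneous of degree zero in $(\mathrm{notional},\mathrm{account\ value})$: for every $\alpha>0$, $r(\alpha\,\mathrm{notional},\alpha\,\mathrm{account\ value})=r(\mathrm{notional},\mathrm{account\ value})$. 2. Therefore a proportional split of an account preserves its score. 3. If no other winner shares the parent's score, a proportional split preserves the aggregate seizure under the queue rule ranked by $r$; that is, the queue rule is Sybil resistant.
   Context: Each winning account has a mark price, an entry price, a notional, an account value $>0$, and a haircutable endowment. A proportional split of an account into children $a=1,\dots,m$ uses fractions $\alpha_a>0$ with $\sum_a\alpha_a=1$. Each child has notional, account value and endowment equal to $\alpha_a$ times the parent's, and the same mark and entry prices. The queue rule with budget $B$ works as follows: - It processes winners in decreasing order of score. - Each processed winner $j$ with endowment $w_j$ has $\min\{w_j,\text{remaining budget}\}$ seized. - The seized amount is subtracted from the remaining budget. The queue rule is Sybil resistant for a split if the total seizure from the children equals the seizure from the unsplit parent. *)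

From HB Require Import structures.
From mathcomp Require Import all_boot all_order all_algebra.
Set Implicit Arguments. Unset Strict Implicit. Unset Printing Implicit Defensive.
Import Order.TTheory GRing.Theory Num.Theory.
Local Open Scope ring_scope.

Section Model.
Variable R : realFieldType.

Record account := Account {
  mark : R; entry : R; notional : R; aval : R ; endow : R }.

Definition rscore (mk en n v : R) : R := mk / en * (n / v).
Definition score (a : account) : R := rscore (mark a) (entry a) (notional a) (aval a).

Definition scale (alpha : R) (a : account) : account :=
  Account (mark a) (entry a) (alpha * notional a) (alpha * aval a) (alpha * endow a).

Fixpoint queue_seize (L : eqType) (f : L -> account) (B : R) (s : seq L) : L -> R :=
  match s with
  | [::] => fun _ => 0
  | l :: s' => let x := Num.min (endow (f l)) B in
      fun l' => (if l' == l then x else 0) + queue_seize f (B - x) s' l'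
  end.

(* s is an admissible processing order of the population f : L -> account:
   every winner appears exactly once, in decreasing (weakly) order of score
   (ties broken arbitrarily). *)
Definition ranked (L : finType) (f : L -> account) (s : seq L) : bool :=
  perm_eq s (enum L) && sorted (fun x y => score (f y) <= score (f x)) s.

Definition unsplit_pop (n : nat) (p : account) (others : 'I_n -> account)
  (l : option 'I_n) : account :=
  match l with None => p | Some i => others i end.

Definition split_pop (n m : nat) (p : account) (alpha : 'I_m -> R)
  (others : 'I_n -> account) (l : 'I_m + 'I_n) : account :=
  match l with inl a => scale (alpha a) p | inr i => others i end.

End Model.

(* Winners are processed by decreasing score, so each score class receives,
   as a whole, min(B', E) where E is its total endowment and
   B' = max(B - E', 0) is what the strictly higher-scoring winners, of total
   endowment E', leave of the budget.  The score is homogeneous of degree zero,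
   so the children of a proportional split keep the parent's score: the
   strictly higher winners are unchanged, and if no other winner shares the
   parent's score the parent's class {parent} is replaced by the class of its
   children, whose endowments add up to the parent's. *)

From HB Require Import structures.
From mathcomp Require Import all_boot all_order all_algebra.
From mathcomp Require Import lra.
Import Order.TTheory GRing.Theory Num.Theory.
Local Open Scope ring_scope.

Lemma rscore_homog (R : realFieldType) (mk en n v alpha : R) :
  alpha != 0 -> rscore mk en (alpha * n) (alpha * v) = rscore mk en n v.
Proof.
by move=> alpha_neq0; rewrite /rscore; congr (_ * _); rewrite invfM mulrACA divff // mul1r.
Qed.

Lemma score_scale (R : realFieldType) (alpha : R) (p : account R) :
  alpha != 0 -> score (scale alpha p) = score p.
Proof. exact: rscore_homog. Qed.

Lemma sorted_filter_cat (T : eqType) (e : rel T) (P : pred T) (s : seq T) :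
  transitive e -> (forall x y, e x y -> P y -> P x) -> sorted e s ->
  filter P s ++ filter (predC P) s = s.
Proof.
move=> e_tr P_up; rewrite sorted_pairwise //.
elim: s => //= x s IH /andP[/allP e_x e_s].
case Px: (P x) => /=; first by rewrite IH.
have notP y : y \in s -> ~~ P y.
  by move=> ys; apply/negP => /(P_up x y (e_x y ys)); rewrite Px.
rewrite (eq_in_filter (a2 := pred0)); last by move=> y /notP /negbTE.
by rewrite filter_pred0 (eq_in_filter (a2 := predT)) ?filter_predT // => y /notP.
Qed.

Section Queue.
Variables (R : realFieldType) (L : eqType) (f : L -> account R).

Fixpoint queue_rest (B : R) (s : seq L) : R :=
  if s is l :: s' then queue_rest (B - Num.min (endow (f l)) B) s' else B.

Lemma queue_seize_notin B s l : l \notin s -> queue_seize f B s l = 0.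
Proof.
elim: s B => [|a s IH] B //=; rewrite in_cons negb_or => /andP[/negbTE -> l_s].
by rewrite add0r IH.
Qed.

Lemma queue_seize_cat B s1 s2 l :
  queue_seize f B (s1 ++ s2) l =
  queue_seize f B s1 l + queue_seize f (queue_rest B s1) s2 l.
Proof. by elim: s1 B => [|a s IH] B /=; rewrite ?add0r // IH addrA. Qed.

Lemma queue_seize_sum B s :
  uniq s -> \sum_(l <- s) queue_seize f B s l = B - queue_rest B s.
Proof.
elim: s B => [|a s IH] B /=; first by rewrite big_nil subrr.
case/andP=> a_s s_uniq; rewrite big_cons /= eqxx (queue_seize_notin _ _ _ a_s).
rewrite addr0 big_split /= IH // (big1_seq _ _ (fun l => if l == a then _ else 0)).
  by rewrite add0r; lra.
by move=> l /= ls; case: eqP ls => // ->; rewrite (negbTE a_s).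
Qed.

Hypothesis endow_ge0 : forall l, 0 <= endow (f l).

Lemma queue_rest_sum B s :
  0 <= B -> queue_rest B s = Num.max (B - \sum_(l <- s) endow (f l)) 0.
Proof.
elim: s B => [|a s IH] B B_ge0 /=.
  by rewrite big_nil subr0; apply/esym/max_idPl.
have sum_ge0 : 0 <= \sum_(l <- s) endow (f l) by rewrite sumr_ge0.
have := endow_ge0 a; rewrite big_cons IH; last by rewrite subr_ge0 ge_min lexx orbT.
by rewrite /Num.min /Num.max; repeat case: ifP; lra.
Qed.

Lemma queue_seize_total B s : uniq s -> 0 <= B ->
  \sum_(l <- s) queue_seize f B s l = Num.min B (\sum_(l <- s) endow (f l)).
Proof.
move=> s_uniq B_ge0; rewrite queue_seize_sum // queue_rest_sum //.
by rewrite /Num.min /Num.max; repeat case: ifP; lra.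
Qed.

End Queue.

Arguments queue_rest {R L} f B s.
Arguments queue_seize_notin {R L f B s l}.

Section ScoreClass.
Variables (R : realFieldType) (L : finType) (f : L -> account R) (k : L -> R).
Variables (B : R) (s : seq L).
Hypothesis s_perm : perm_eq s (enum L).
Hypothesis s_sorted : sorted (fun x y => k y <= k x) s.

Lemma queue_seize_tie t l0 : k l0 = t ->
  queue_seize f B s l0 =
  queue_seize f (queue_rest f B [seq l <- s | t < k l]) [seq l <- s | k l == t] l0.
Proof.
move=> kl0.
have k_tr : transitive (fun x y => k y <= k x) by move=> ? ? ? h1 h2; exact: le_trans h2 h1.
set below := [seq l <- s | predC (fun l => t < k l) l].
have split_above := @sorted_filter_cat _ _ (fun l => t < k l) _ k_tr
  (fun x y kyx tky => lt_le_trans tky kyx) s_sorted.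
have split_below := @sorted_filter_cat _ _ (fun l => t <= k l) _ k_tr
  (fun x y kyx tky => le_trans tky kyx) (sorted_filter k_tr _ s_sorted : sorted _ below).
have tie_below : [seq l <- s | k l == t] = [seq l <- below | t <= k l].
  by rewrite -filter_predI; apply: eq_filter => l /=; rewrite -leNgt -eq_le.
have s_split : s = [seq l <- s | t < k l] ++ [seq l <- s | k l == t] ++
                   [seq l <- below | predC (fun l => t <= k l) l].
  by rewrite tie_below split_below split_above.
have l0_above : l0 \notin [seq l <- s | t < k l] by rewrite mem_filter kl0 ltxx.
have l0_below : l0 \notin [seq l <- below | predC (fun l => t <= k l) l].
  by rewrite mem_filter /= kl0 lexx.
rewrite {1}s_split !queue_seize_cat (queue_seize_notin l0_above).
by rewrite (queue_seize_notin l0_below) add0r addr0.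
Qed.

Lemma sum_perm_enum (F : L -> R) (P : pred L) :
  \sum_(l <- s | P l) F l = \sum_(l | P l) F l.
Proof. by rewrite (perm_big _ s_perm) enumT. Qed.

Hypotheses (endow_ge0 : forall l, 0 <= endow (f l)) (B_ge0 : 0 <= B).

Lemma queue_seize_class t :
  \sum_(l | k l == t) queue_seize f B s l =
  Num.min (Num.max (B - \sum_(l | t < k l) endow (f l)) 0)
          (\sum_(l | k l == t) endow (f l)).
Proof.
set tie := [seq l <- s | k l == t].
set B' := queue_rest f B [seq l <- s | t < k l].
have tie_uniq : uniq tie by rewrite filter_uniq // (perm_uniq s_perm) enum_uniq.
have sum_tie (G : L -> R) : \sum_(l | k l == t) G l = \sum_(l <- tie) G l.
  by rewrite /tie big_filter sum_perm_enum.
have B'E : B' = Num.max (B - \sum_(l | t < k l) endow (f l)) 0.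
  by rewrite /B' queue_rest_sum // big_filter sum_perm_enum.
have B'_ge0 : 0 <= B' by rewrite B'E le_max lexx orbT.
rewrite (eq_bigr (fun l => queue_seize f B' tie l)); last by move=> l /eqP /queue_seize_tie.
by rewrite !sum_tie queue_seize_total // B'E.
Qed.

End ScoreClass.

Lemma big_optionType (R : Type) (idx : R) (op : Monoid.law idx) (I : finType)
    (P : pred (option I)) (F : option I -> R) :
  \big[op/idx]_(l | P l) F l =
  op (if P None then F None else idx) (\big[op/idx]_(i | P (Some i)) F (Some i)).
Proof.
rewrite ![index_enum _]unlock [@Finite.enum in LHS]unlock /= big_cons big_map.
by case: (P None); rewrite ?Monoid.mul1m.
Qed.

Section Populations.
Context {R : realFieldType} {n m : nat} {p : account R}.
Context {others : 'I_n -> account R} {alpha : 'I_m -> R}.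
Hypothesis alpha_neq0 : forall a, alpha a != 0.
Hypothesis others_score : forall i, score (others i) != score p.

Lemma sum_split_pop_tie (F : 'I_m + 'I_n -> R) :
  \sum_(l | score (split_pop p alpha others l) == score p) F l = \sum_a F (inl a).
Proof.
rewrite big_sumType /= [X in _ + X]big_pred0 ?addr0; last by move=> i; exact/negbTE.
by apply: eq_bigl => a; rewrite /= score_scale ?eqxx.
Qed.

Lemma sum_unsplit_pop_tie (F : option 'I_n -> R) :
  \sum_(l | score (unsplit_pop p others l) == score p) F l = F None.
Proof. by apply: big_pred1 => -[i|] /=; rewrite ?eqxx ?(negbTE (others_score i)). Qed.

Lemma sum_split_pop_above (F : 'I_m + 'I_n -> R) :
  \sum_(l | score p < score (split_pop p alpha others l)) F l =
  \sum_(i | score p < score (others i)) F (inr i).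
Proof.
rewrite big_sumType /= [X in X + _]big_pred0 ?add0r // => a /=.
by rewrite score_scale ?ltxx.
Qed.

Lemma sum_unsplit_pop_above (F : option 'I_n -> R) :
  \sum_(l | score p < score (unsplit_pop p others l)) F l =
  \sum_(i | score p < score (others i)) F (Some i).
Proof. by rewrite big_optionType /= ltxx add0r. Qed.

End Populations.

Theorem mainTheorem6 (R : realFieldType) :
  (* 1. homogeneity of degree zero in (notional, account value) *)
  (forall (mk en n v alpha : R), 0 < alpha -> 0 < v ->
     rscore mk en (alpha * n) (alpha * v) = rscore mk en n v)
  /\
  (* 2. a proportional split preserves the score *)
  (forall (p : account R) (m : nat) (alpha : 'I_m -> R),
     0 < aval p -> (forall a, 0 < alpha a) -> \sum_(a < m) alpha a = 1 ->
     forall a, score (scale (alpha a) p) = score p)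
  /\
  (* 3. Sybil resistance of the queue rule ranked by the score *)
  (forall (p : account R) (n m : nat) (others : 'I_n -> account R)
          (alpha : 'I_m -> R) (B : R)
          (s0 : seq (option 'I_n)) (s1 : seq ('I_m + 'I_n)%type),
     0 < aval p -> 0 <= endow p ->
     (forall i, 0 < aval (others i)) -> (forall i, 0 <= endow (others i)) ->
     (forall a, 0 < alpha a) -> \sum_(a < m) alpha a = 1 ->
     0 <= B ->
     (forall i, score (others i) != score p) ->
     ranked (unsplit_pop p others) s0 ->
     ranked (split_pop p alpha others) s1 ->
     \sum_(a < m) queue_seize (split_pop p alpha others) B s1 (inl a)
       = queue_seize (unsplit_pop p others) B s0 None).
Proof.
split=> [mk en n v alpha /lt0r_neq0 alpha_neq0 _|]; first exact: rscore_homog.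
split=> [p m alpha _ alpha_gt0 _ a|]; first exact/score_scale/lt0r_neq0.
move=> p n m others alpha B s0 s1 _ endow_p _ endow_others alpha_gt0 alpha_sum
  B_ge0 others_score /andP[perm0 sorted0] /andP[perm1 sorted1].
have alpha_neq0 a : alpha a != 0 by exact: lt0r_neq0.
have endow0_ge0 : forall l, 0 <= endow (unsplit_pop p others l) by case.
have endow1_ge0 : forall l, 0 <= endow (split_pop p alpha others l).
  by case=> [a|i] //=; rewrite mulr_ge0 // ltW.
rewrite -(sum_split_pop_tie alpha_neq0 others_score).
rewrite -(sum_unsplit_pop_tie others_score (queue_seize _ B s0)).
rewrite !queue_seize_class // sum_split_pop_above // sum_unsplit_pop_above.
rewrite sum_split_pop_tie // sum_unsplit_pop_tie //=.
by rewrite -mulr_suml alpha_sum mul1r.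
Qed.
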